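(* Let $n\ge m\ge0$, $d\ge1$, and let $t_2,\dots,t_n,s_1,\dots,s_m$ be integers. Let $\tilde\omega$ be the class of $\prod_{i=2}^nx_i^{t_i}\prod_{j=1}^my_j^{s_j}\,\frac{dx_2}{x_2}\wedge\cdots\wedge\frac{dx_n}{x_n}\wedge\frac{dy_1}{y_1}\wedge\cdots\wedge\frac{dy_m}{y_m}$ in $\mathcal{H}^{n+m-1}_{\mathrm{dR}}(U/S,f)$. Then for every $2\le i\le n$ and $1\le j\le m$, $$(D-t_i/d)\,\tilde\omega=x_i^d\cdot\tilde\omega\qquad\text{and}\qquad (D+s_j/d)\,\tilde\omega=y_j^d\cdot\tilde\omega,$$ where $x_i^d\cdot\tilde\omega$ (resp. $y_j^d\cdot\tilde\omega$) is the class of the form multiplied by $x_i^d$ (resp. $y_j^d$).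
   Context: Varieties over $\mathbb{C}$. $S=\mathbb{G}_m\setminus\{1\}$ if $n=m$, $S=\mathbb{G}_m$ if $n>m$, coordinate $z$. $U=S\times\mathbb{G}_m^{n+m-1}$ with coordinates $(z,x_2,\dots,x_n,y_1,\dots,y_m)$, $f=\sum_{i=2}^nx_i^d-\sum_jy_j^d+z\prod_jy_j^d/\prod_{i\ge2}x_i^d$. $\mathcal{H}^{n+m-1}_{\mathrm{dR}}(U/S,f)$ is the $(n+m-1)$-st cohomology of the relative twisted de Rham complex $(\Omega^\bullet_{U/S},d+df)$, and $D=\nabla_{z\partial_z}$ is the Gauss–Manin connection, $\nabla_{z\partial_z}[g\eta]=[(z\partial_zg+z\partial_z(f)\,g)\eta]$. *)

(* Relative twisted de Rham cohomology of the torus family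
   U = S x G_m^{n+m-1} over S, in top degree, written out explicitly. *)
From HB Require Import structures.
From mathcomp Require Import all_boot all_order all_algebra.
From mathcomp Require Import complex.
From mathcomp Require Import Rstruct.
Unset Printing Implicit Defensive.
Import Order.TTheory GRing.Theory Num.Theory.
Local Open Scope ring_scope.

Notation CC := (complex Rdefinitions.R).

Section Twisted.
Variables n m d : nat.

(* the x-variables x_2..x_n are indexed by i : 'I_(n.-1) (x_{i+2});
   the y-variables y_1..y_m by j : 'I_m (y_{j+1}). *)
Local Notation nx := n.-1.

(* A term  c * z^a * (z-1)^(-b) * prod_i x_i^(u i) * prod_j y_j^(v j),
   a regular function on U (b must be 0 when n <> m, see [admissible]). *)
Record term := Term {
  tc : CC; tz : int; tz1 : nat; tx : 'I_nx -> int; ty : 'I_m -> int }.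

(* A regular function on U, given as a finite sum of terms; a top-degree
   relative form  g * dx_2/x_2 /\ ... /\ dy_m/y_m  is represented by g. *)
Definition rfun := seq term.

Definition admissible (g : rfun) : Prop :=
  n <> m -> all (fun T => tz1 T == 0%N) g.

Record point := Point { pz : CC; px : 'I_nx -> CC; py : 'I_m -> CC }.

Definition in_U (P : point) : Prop :=
  [/\ pz P != 0, (n = m -> pz P != 1),
      (forall i, px P i != 0) & (forall j, py P j != 0)].

Definition eval_term (T : term) (P : point) : CC :=
  tc T * pz P ^ tz T * ((pz P - 1) ^+ tz1 T)^-1
  * (\prod_i px P i ^ tx T i) * (\prod_j py P j ^ ty T j).

Definition eval (g : rfun) (P : point) : CC := \sum_(T <- g) eval_term T P.

Definition scale (c : CC) (g : rfun) : rfun :=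
  [seq Term (c * tc T) (tz T) (tz1 T) (tx T) (ty T) | T <- g].

Definition mul_term (T1 T2 : term) : term :=
  Term (tc T1 * tc T2) (tz T1 + tz T2) (tz1 T1 + tz1 T2)
       (fun i => tx T1 i + tx T2 i) (fun j => ty T1 j + ty T2 j).

Definition mul (g1 g2 : rfun) : rfun := [seq mul_term T1 T2 | T1 <- g1, T2 <- g2].

Definition thx (i : 'I_nx) (g : rfun) : rfun :=
  [seq Term (tc T * (tx T i)%:~R) (tz T) (tz1 T) (tx T) (ty T) | T <- g].
Definition thy (j : 'I_m) (g : rfun) : rfun :=
  [seq Term (tc T * (ty T j)%:~R) (tz T) (tz1 T) (tx T) (ty T) | T <- g].
(* z d/dz (z^a (z-1)^-b) = a z^a (z-1)^-b - b z^(a+1) (z-1)^-(b+1) *)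
Definition thz (g : rfun) : rfun :=
  flatten [seq [:: Term (tc T * (tz T)%:~R) (tz T) (tz1 T) (tx T) (ty T);
                   Term (- (tc T * (tz1 T)%:R)) (tz T + 1) (tz1 T).+1 (tx T) (ty T)]
          | T <- g].

Definition unitx (i : 'I_nx) (e : int) : 'I_nx -> int :=
  fun k => if k == i then e else 0.
Definition unity (j : 'I_m) (e : int) : 'I_m -> int :=
  fun k => if k == j then e else 0.

(* f = sum_{i>=2} x_i^d - sum_j y_j^d + z prod_j y_j^d / prod_{i>=2} x_i^d *)
Definition fpot : rfun :=
  [seq Term 1 0 0 (unitx i d) (fun=> 0) | i <- enum 'I_nx]
  ++ [seq Term (-1) 0 0 (fun=> 0) (unity j d) | j <- enum 'I_m]
  ++ [:: Term 1 1 0 (fun=> - (d%:Z)) (fun=> d%:Z)].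

Definition nabx (i : 'I_nx) (g : rfun) : rfun := thx i g ++ mul g (thx i fpot).
Definition naby (j : 'I_m) (g : rfun) : rfun := thy j g ++ mul g (thy j fpot).

(* g * Omega is in the image of (d + df) on relative (n+m-2)-forms
   sum_k g_k * omega_k, where omega_k is Omega with its k-th factor removed:
   (d + df)(g_k omega_k) = (-1)^k (theta_k g_k + g_k theta_k f) Omega. *)
Definition exact (g : rfun) : Prop :=
  exists (gx : 'I_nx -> rfun) (gy : 'I_m -> rfun),
    [/\ (forall i, admissible (gx i)), (forall j, admissible (gy j)) &
        forall P, in_U P ->
          eval g P = \sum_(i < nx) (-1) ^+ i * eval (nabx i (gx i)) P
                     + \sum_(j < m) (-1) ^+ (nx + j) * eval (naby j (gy j)) P].

Definition cohom_eq (g1 g2 : rfun) : Prop := exact (g1 ++ scale (-1) g2).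

Definition GM (g : rfun) : rfun := thz g ++ mul g (thz fpot).

Definition omega (t : 'I_nx -> int) (s : 'I_m -> int) : rfun :=
  [:: Term 1 0 0 t s].

Definition xpow (i : 'I_nx) (g : rfun) : rfun :=
  mul [:: Term 1 0 0 (unitx i d) (fun=> 0)] g.
Definition ypow (j : 'I_m) (g : rfun) : rfun :=
  mul [:: Term 1 0 0 (fun=> 0) (unity j d)] g.

End Twisted.

From Pilot Require Import Defs.
From HB Require Import structures.
From mathcomp Require Import all_boot all_order all_algebra.
From mathcomp Require Import complex Rstruct ring.
Import Order.TTheory GRing.Theory Num.Theory.
Local Open Scope ring_scope.

(* Everything is checked pointwise on U.  Since omega has no z-dependence,
   theta_z omega = 0, while theta_z f = E := z prod_j y_j^d / prod_i x_i^d; hence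
   D omega = E omega.  The twisted derivatives
     nabla_{x_i} omega = (t_i + d x_i^d - d E) omega,
     nabla_{y_j} omega = (s_j - d y_j^d + d E) omega
   are exact, being (d + df) of (n+m-2)-forms, so
   (D - t_i/d - x_i^d) omega = -(1/d) nabla_{x_i} omega  and
   (D + s_j/d - y_j^d) omega = (1/d) nabla_{y_j} omega  vanish in cohomology. *)

Section TwistedCohomology.
Variables n m d : nat.

Local Notation nx := n.-1.
Local Notation term := (Defs.term n m).
Local Notation rfun := (Defs.rfun n m).
Local Notation point := (Defs.point n m).
Local Notation Term := (Defs.Term n m).
Local Notation tc := (Defs.tc n m).
Local Notation tz := (Defs.tz n m).
Local Notation tz1 := (Defs.tz1 n m).
Local Notation tx := (Defs.tx n m).
Local Notation ty := (Defs.ty n m).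
Local Notation eval_term := (Defs.eval_term n m).
Local Notation eval := (Defs.eval n m).
Local Notation in_U := (Defs.in_U n m).
Local Notation admissible := (Defs.admissible n m).
Local Notation scale := (Defs.scale n m).
Local Notation mul := (Defs.mul n m).
Local Notation thx := (Defs.thx n m).
Local Notation thy := (Defs.thy n m).
Local Notation thz := (Defs.thz n m).
Local Notation fpot := (Defs.fpot n m d).
Local Notation nabx := (Defs.nabx n m d).
Local Notation naby := (Defs.naby n m d).
Local Notation GM := (Defs.GM n m d).
Local Notation exact := (Defs.exact n m d).
Local Notation cohom_eq := (Defs.cohom_eq n m d).
Local Notation omega := (Defs.omega n m).

Definition xmon (i : 'I_nx) : term := Term 1 0 0 (unitx n i d) (fun=> 0).
Definition ymon (j : 'I_m) : term := Term 1 0 0 (fun=> 0) (unity m j d).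
Definition zmon : term := Term 1 1 0 (fun=> - (d%:Z)) (fun=> d%:Z).

Lemma eval_cat (g1 g2 : rfun) P : eval (g1 ++ g2) P = eval g1 P + eval g2 P.
Proof. exact: big_cat. Qed.

Lemma eval_nil P : eval [::] P = 0.
Proof. exact: big_nil. Qed.

Lemma eval_seq1 (T : term) P : eval [:: T] P = eval_term T P.
Proof. exact: big_seq1. Qed.

Lemma eval_term_scale (T : term) c P :
  eval_term (Term (tc T * c) (tz T) (tz1 T) (tx T) (ty T)) P = c * eval_term T P.
Proof. by rewrite /Defs.eval_term /= [tc T * c]mulrC !mulrA. Qed.

Lemma eval_term_coef0 a b u v P : eval_term (Term 0 a b u v) P = 0.
Proof. by rewrite /Defs.eval_term /= !mul0r. Qed.

Lemma eval_scale c (g : rfun) P : eval (scale c g) P = c * eval g P.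
Proof.
rewrite /Defs.eval big_map mulr_sumr; apply: eq_bigr => T _.
by rewrite [c * _]mulrC eval_term_scale.
Qed.

Lemma eval_term_mul (T1 T2 : term) P : in_U P ->
  eval_term (mul_term n m T1 T2) P = eval_term T1 P * eval_term T2 P.
Proof.
case=> z_neq0 _ x_neq0 y_neq0.
have prodD (k : nat) (a : 'I_k -> CC) (u v : 'I_k -> int) : (forall l, a l != 0) ->
    \prod_l a l ^ (u l + v l) = (\prod_l a l ^ u l) * \prod_l a l ^ v l.
  by move=> a_neq0; rewrite -big_split; apply: eq_bigr => l _; rewrite expfzDr.
rewrite /Defs.eval_term /= expfzDr // exprD invfM !prodD //; ring.
Qed.

Lemma eval_mul (g1 g2 : rfun) P : in_U P -> eval (mul g1 g2) P = eval g1 P * eval g2 P.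
Proof.
move=> hP; rewrite /Defs.eval /Defs.mul big_allpairs_dep mulr_suml.
by apply: eq_bigr => T1 _; rewrite mulr_sumr; apply: eq_bigr => T2 _; apply: eval_term_mul.
Qed.

Lemma eval_thx i (g : rfun) P :
  eval (thx i g) P = \sum_(T <- g) (tx T i)%:~R * eval_term T P.
Proof. by rewrite /Defs.eval big_map; apply: eq_bigr => T _; rewrite eval_term_scale. Qed.

Lemma eval_thy j (g : rfun) P :
  eval (thy j g) P = \sum_(T <- g) (ty T j)%:~R * eval_term T P.
Proof. by rewrite /Defs.eval big_map; apply: eq_bigr => T _; rewrite eval_term_scale. Qed.

Lemma eval_thz (g : rfun) P : all (fun T => tz1 T == 0%N) g ->
  eval (thz g) P = \sum_(T <- g) (tz T)%:~R * eval_term T P.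
Proof.
elim: g => [|T g IHg] /=; first by rewrite !eval_nil big_nil.
case/andP=> /eqP T_tz1 /IHg {}IHg.
rewrite eval_cat IHg big_cons /Defs.eval big_cons big_seq1.
by rewrite eval_term_scale T_tz1 mulr0 oppr0 eval_term_coef0 addr0.
Qed.

Lemma thx_scale i c (g : rfun) : thx i (scale c g) = scale c (thx i g).
Proof. by rewrite /Defs.thx /Defs.scale -!map_comp; apply: eq_map => T /=; rewrite mulrA. Qed.

Lemma thy_scale j c (g : rfun) : thy j (scale c g) = scale c (thy j g).
Proof. by rewrite /Defs.thy /Defs.scale -!map_comp; apply: eq_map => T /=; rewrite mulrA. Qed.

Lemma admissible_scale c (g : rfun) : admissible g -> admissible (scale c g).
Proof. by move=> g_adm /g_adm; rewrite all_map. Qed.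

Lemma admissible_omega t s : admissible (omega t s).
Proof. by []. Qed.

Lemma sum_fpot (F : term -> CC) :
  \sum_(T <- fpot) F T = \sum_i F (xmon i)
    + \sum_j F (Term (-1) 0 0 (fun=> 0) (unity m j d)) + F zmon.
Proof. by rewrite /fpot !big_cat !big_map big_seq1; exact: addrA. Qed.

Lemma eval_thx_fpot i P :
  eval (thx i fpot) P = d%:R * (eval_term (xmon i) P - eval_term zmon P).
Proof.
rewrite eval_thx sum_fpot (bigD1 i) //= big1 => [|k /negbTE k_neq_i]; last first.
  by rewrite /unitx eq_sym k_neq_i mul0r.
rewrite big1 => [|k _]; last exact: mul0r.
by rewrite /unitx eqxx intrN mulNr; ring.
Qed.

Lemma eval_thy_fpot j P :
  eval (thy j fpot) P = d%:R * (eval_term zmon P - eval_term (ymon j) P).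
Proof.
rewrite eval_thy sum_fpot big1 => [|k _]; last exact: mul0r.
rewrite (bigD1 j) //= big1 => [|k /negbTE k_neq_j]; last first.
  by rewrite /unity eq_sym k_neq_j mul0r.
have -> : eval_term (Term (-1) 0 0 (fun=> 0) (unity m j d)) P = - eval_term (ymon j) P.
  by rewrite /Defs.eval_term /= -!mulNr.
by rewrite /unity eqxx; ring.
Qed.

Lemma eval_thz_fpot P : eval (thz fpot) P = eval_term zmon P.
Proof.
rewrite eval_thz; last by rewrite /fpot !all_cat !all_map; apply/and3P; split=> //; apply/allP.
by rewrite sum_fpot !big1 => [|k _|k _]; rewrite ?mul0r ?add0r ?mul1r.
Qed.

Lemma eval_nabx i (g : rfun) P : in_U P ->
  eval (nabx i g) P = eval (thx i g) P + eval g P * eval (thx i fpot) P.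
Proof. by move=> hP; rewrite eval_cat eval_mul. Qed.

Lemma eval_naby j (g : rfun) P : in_U P ->
  eval (naby j g) P = eval (thy j g) P + eval g P * eval (thy j fpot) P.
Proof. by move=> hP; rewrite eval_cat eval_mul. Qed.

Lemma eval_GM (g : rfun) P : in_U P ->
  eval (GM g) P = eval (thz g) P + eval g P * eval (thz fpot) P.
Proof. by move=> hP; rewrite eval_cat eval_mul. Qed.

Lemma eval_nabx_scale i c (g : rfun) P : in_U P ->
  eval (nabx i (scale c g)) P = c * eval (nabx i g) P.
Proof. by move=> hP; rewrite !eval_nabx // thx_scale !eval_scale mulrDr mulrA. Qed.

Lemma eval_naby_scale j c (g : rfun) P : in_U P ->
  eval (naby j (scale c g)) P = c * eval (naby j g) P.
Proof. by move=> hP; rewrite !eval_naby // thy_scale !eval_scale mulrDr mulrA. Qed.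

Lemma nabx_nil i : nabx i [::] = [::].
Proof. by []. Qed.

Lemma naby_nil j : naby j [::] = [::].
Proof. by []. Qed.

Lemma exact_eval (g h : rfun) :
  (forall P, in_U P -> eval g P = eval h P) -> exact h -> exact g.
Proof.
move=> eq_gh [gx [gy [gx_adm gy_adm h_eq]]].
by exists gx, gy; split=> // P hP; rewrite eq_gh ?h_eq.
Qed.

Lemma exact_nabx i (g : rfun) : admissible g -> exact (nabx i g).
Proof.
move=> g_adm.
exists (fun k => if k == i then scale ((-1) ^+ i) g else [::]), (fun=> [::]).
split=> [k|//|P hP]; first by case: (k == i); first exact: admissible_scale.
rewrite [X in _ + X]big1 => [|j _]; last by rewrite naby_nil eval_nil mulr0.
rewrite addr0 (bigD1 i) //= eqxx big1 => [|k /negbTE ->]; last first.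
  by rewrite nabx_nil eval_nil mulr0.
by rewrite eval_nabx_scale // signrMK addr0.
Qed.

Lemma exact_naby j (g : rfun) : admissible g -> exact (naby j g).
Proof.
move=> g_adm.
exists (fun=> [::]), (fun k => if k == j then scale ((-1) ^+ (nx + j)) g else [::]).
split=> [//|k|P hP]; first by case: (k == j); first exact: admissible_scale.
rewrite [X in X + _]big1 => [|i _]; last by rewrite nabx_nil eval_nil mulr0.
rewrite add0r (bigD1 j) //= eqxx big1 => [|k /negbTE ->]; last first.
  by rewrite naby_nil eval_nil mulr0.
by rewrite eval_naby_scale // signrMK addr0.
Qed.

Lemma cohom_eq_exact (g1 g2 h : rfun) : exact h ->
  (forall P, in_U P -> eval g1 P - eval g2 P = eval h P) -> cohom_eq g1 g2.
Proof.
move=> h_exact eq_h; apply: exact_eval h_exact => P hP.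
by rewrite eval_cat eval_scale mulN1r eq_h.
Qed.

Variables (t : 'I_nx -> int) (s : 'I_m -> int).

Lemma eval_GM_omega P : in_U P ->
  eval (GM (omega t s)) P = eval_term zmon P * eval (omega t s) P.
Proof.
move=> hP; rewrite eval_GM // eval_thz // eval_thz_fpot big_seq1 mul0r add0r.
exact: mulrC.
Qed.

Lemma eval_nabx_omega i P : in_U P ->
  eval (nabx i (omega t s)) P
  = ((t i)%:~R + d%:R * (eval_term (xmon i) P - eval_term zmon P)) * eval (omega t s) P.
Proof. by move=> hP; rewrite eval_nabx // eval_thx_fpot eval_thx big_seq1 eval_seq1; ring. Qed.

Lemma eval_naby_omega j P : in_U P ->
  eval (naby j (omega t s)) P
  = ((s j)%:~R + d%:R * (eval_term zmon P - eval_term (ymon j) P)) * eval (omega t s) P.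
Proof. by move=> hP; rewrite eval_naby // eval_thy_fpot eval_thy big_seq1 eval_seq1; ring. Qed.

End TwistedCohomology.

Theorem lemma2p15 (n m d : nat) (t : 'I_n.-1 -> int) (s : 'I_m -> int) :
  (m <= n)%N -> (1 <= d)%N ->
  (forall i : 'I_n.-1,
     cohom_eq n m d
       (GM n m d (omega n m t s) ++ scale n m (- ((t i)%:~R / d%:R) : CC) (omega n m t s))
       (xpow n m d i (omega n m t s)))
  /\
  (forall j : 'I_m,
     cohom_eq n m d
       (GM n m d (omega n m t s) ++ scale n m ((s j)%:~R / d%:R : CC) (omega n m t s))
       (ypow n m d j (omega n m t s))).
Proof.
move=> _ d_gt0; have d_neq0 : (d%:R : CC) != 0 by rewrite pnatr_eq0 -lt0n.
split=> [i|j].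
- apply: (@cohom_eq_exact _ _ _ _ _ (nabx n m d i (scale n m (- d%:R^-1) (omega n m t s)))).
    exact/exact_nabx/admissible_scale/admissible_omega.
  move=> P hP; rewrite eval_cat eval_GM_omega // eval_scale eval_nabx_scale //.
  by rewrite eval_nabx_omega // /xpow eval_mul // eval_seq1 -/(xmon n m d i); field.
- apply: (@cohom_eq_exact _ _ _ _ _ (naby n m d j (scale n m d%:R^-1 (omega n m t s)))).
    exact/exact_naby/admissible_scale/admissible_omega.
  move=> P hP; rewrite eval_cat eval_GM_omega // eval_scale eval_naby_scale //.
  by rewrite eval_naby_omega // /ypow eval_mul // eval_seq1 -/(ymon n m d j); field.
Qed.
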